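(* Let $\mathrm{H}$ be a Hilbert space and $\Phi=\{\phi_n\}_{n\ge1}$ a sequence of elements of $\mathrm{H}$, with truncations $\Phi_N=\{\phi_n\}_{n=1}^N$ and synthesis map $\mathcal T_N:\mathbb{C}^N\to\mathrm{H}$, $\mathcal T_N\mathbf z=\sum_{n=1}^N z_n\phi_n$. Fix $\epsilon>0$. For each $N$ let $G_N=\{\langle\phi_i,\phi_j\rangle\}_{i,j=1}^N$ be the Gram matrix, with eigen/singular value decomposition $G_N=V\Sigma V^*$, $V$ unitary with columns $v_1,\dots,v_N$ and singular values $\sigma_1,\dots,\sigma_N\ge0$. Define $\mathrm{H}_N^\epsilon\triangleq\operatorname{span}\{\mathcal T_Nv_k:\sigma_k>\epsilon\}$, let $\mathcal P_N^\epsilon f$ be the orthogonal projection of $f\in\mathrm{H}$ onto $\mathrm{H}_N^\epsilon$, and let $\mathbf c^\epsilon_N\in\mathbb{C}^N$ be its coefficient vector obtained as the truncated-SVD regularised solution of $G_N\mathbf c=\mathbf b$, $\mathbf b=\{\langle f,\phi_n\rangle\}_{n=1}^N$, discarding singular values $\le\epsilon$ (so $\mathcal P^\epsilon_Nf=\mathcal T_N\mathbf c^\epsilon_N$). Then for every $f\in\mathrm{H}$ and $N\ge2$, $$\|f-\mathcal P_N^\epsilon f\|_{\mathrm{H}}\le\|f-\mathcal P^\epsilon_{N-1}f\|_{\mathrm{H}}+\sqrt{\epsilon}\,\|\mathbf c^\epsilon_{N-1}\|_{\ell^2(\mathbb{C}^{N-1})}.$$ *)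

From HB Require Import structures.
From mathcomp Require Import all_boot all_order all_algebra.
From mathcomp Require Import complex.
From mathcomp Require Import reals.
Set Implicit Arguments. Unset Strict Implicit. Unset Printing Implicit Defensive.
Import Order.TTheory GRing.Theory Num.Theory.
Local Open Scope ring_scope.
Local Open Scope complex_scope.

Section Defs.
Variable R : realType.
Local Notation C := R[i].

Definition is_inner_product (H : lmodType C) (ip : H -> H -> C) : Prop :=
  [/\ forall (a : C) (x y z : H), ip (a *: x + y) z = a * ip x z + ip y z,
      forall x y : H, ip y x = (ip x y)^*,
      forall x : H, 0 <= ip x x
    & forall x : H, ip x x = 0 -> x = 0].

Definition hnorm (H : lmodType C) (ip : H -> H -> C) (x : H) : R :=
  Num.sqrt (complex.Re (ip x x)).

Definition ip_complete (H : lmodType C) (ip : H -> H -> C) : Prop :=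
  forall u : nat -> H,
    (forall e : R, 0 < e -> exists M : nat, forall m n : nat,
        (M <= m)%N -> (M <= n)%N -> hnorm ip (u m - u n) < e) ->
    exists l : H, forall e : R, 0 < e -> exists M : nat, forall n : nat,
        (M <= n)%N -> hnorm ip (u n - l) < e.

Definition is_hilbert (H : lmodType C) (ip : H -> H -> C) : Prop :=
  is_inner_product ip /\ ip_complete ip.

(* Synthesis operator T_N z = sum_{n<N} z_n phi_n  (sequence indexed from 0). *)
Definition synth (H : lmodType C) (phi : nat -> H) (N : nat) (z : 'cV[C]_N) : H :=
  \sum_(n < N) z n 0 *: phi n.

(* Gram matrix of Phi_N, i.e. the matrix of T_N^* T_N:
   entry (i,j) = <phi_j, phi_i> (inner product linear in first argument). *)
Definition gram (H : lmodType C) (ip : H -> H -> C) (phi : nat -> H) (N : nat)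
  : 'M[C]_N := \matrix_(i < N, j < N) ip (phi j) (phi i).

Definition datavec (H : lmodType C) (ip : H -> H -> C) (phi : nat -> H) (N : nat)
  (f : H) : 'cV[C]_N := \col_(n < N) ip f (phi n).

Definition adjmx (m n : nat) (A : 'M[C]_(m, n)) : 'M[C]_(n, m) :=
  (map_mx (fun z : C => z^*) A)^T.

(* G = V Sigma V^*, V unitary, sigma_k >= 0: a singular value (= eigen-)
   decomposition of the Hermitian PSD matrix G. *)
Definition is_svd (N : nat) (G V : 'M[C]_N) (sigma : 'rV[C]_N) : Prop :=
  [/\ V *m adjmx V = 1%:M,
      adjmx V *m V = 1%:M,
      forall k : 'I_N, 0 <= sigma 0 k
    & G = V *m diag_mx sigma *m adjmx V].

Definition in_Heps (H : lmodType C) (phi : nat -> H) (N : nat)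
  (V : 'M[C]_N) (sigma : 'rV[C]_N) (eps : R) (x : H) : Prop :=
  exists a : 'I_N -> C,
    (forall k, ~ ((eps%:C) < sigma 0 k) -> a k = 0) /\
    x = \sum_(k < N) a k *: synth phi (col k V).

Definition is_orth_proj (H : lmodType C) (ip : H -> H -> C) (phi : nat -> H)
  (N : nat) (V : 'M[C]_N) (sigma : 'rV[C]_N) (eps : R) (f p : H) : Prop :=
  in_Heps phi V sigma eps p /\
  forall y, in_Heps phi V sigma eps y -> ip (f - p) y = 0.

Definition tsvd_coef (N : nat) (V : 'M[C]_N) (sigma : 'rV[C]_N) (eps : R)
  (b : 'cV[C]_N) : 'cV[C]_N :=
  V *m diag_mx (\row_k (if (eps%:C) < sigma 0 k then (sigma 0 k)^-1 else 0))
    *m adjmx V *m b.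

Definition l2norm (N : nat) (c : 'cV[C]_N) : R :=
  Num.sqrt (\sum_(n < N) (complex.Re (c n 0) ^+ 2 + complex.Im (c n 0) ^+ 2)).

End Defs.

From HB Require Import structures.
From mathcomp Require Import all_boot all_order all_algebra.
From mathcomp Require Import complex.
From mathcomp Require Import reals.
From mathcomp Require Import ring lra.
Set Implicit Arguments. Unset Strict Implicit. Unset Printing Implicit Defensive.
Import Order.TTheory GRing.Theory Num.Theory.
Local Open Scope ring_scope.
Local Open Scope complex_scope.

(* Let c be the truncated-SVD coefficients at level N-1, so that
   P_{N-1} f = T_{N-1} c, and let z be c padded with a zero, so that
   T_N z = P_{N-1} f and |z| = |c|.  Write z = V w in the eigenbasis of G_N.
   Keeping only the coordinates of w with sigma_k > eps gives an element g of
   H_N^eps, and the discarded part has squared norm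
   sum_{sigma_k <= eps} sigma_k |w_k|^2 <= eps |w|^2 = eps |c|^2.  Since P_N f
   is the best approximation of f in H_N^eps,
   |f - P_N f| <= |f - g| <= |f - P_{N-1} f| + |P_{N-1} f - g|
              <= |f - P_{N-1} f| + sqrt(eps) |c|. *)

Section ComplexFacts.
Variable R : realType.
Local Notation C := R[i].

Lemma ReD (a b : C) : complex.Re (a + b) = complex.Re a + complex.Re b.
Proof. exact: (raddfD (@complex.Re R : Rcomplex R -> R)). Qed.

Lemma Re_sum I (r : seq I) (P : pred I) (F : I -> C) :
  complex.Re (\sum_(i <- r | P i) F i) = \sum_(i <- r | P i) complex.Re (F i).
Proof. exact: (raddf_sum (@complex.Re R : Rcomplex R -> R)). Qed.

Lemma Re_conjc (z : C) : complex.Re z^* = complex.Re z.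
Proof. by case: z. Qed.

Lemma Re_realM (s : R) (z : C) : complex.Re (s%:C * z) = s * complex.Re z.
Proof. by case: z => a b /=; simpc. Qed.

Lemma Re_conjcM_self (z : C) :
  complex.Re (z^* * z) = complex.Re z ^+ 2 + complex.Im z ^+ 2.
Proof. by rewrite mulrC -normCK -add_Re2_Im2. Qed.

Lemma ge0_RecE (z : C) : 0 <= z -> (complex.Re z)%:C = z.
Proof. by move/ger0_real/RRe_real. Qed.

End ComplexFacts.

Section InnerProduct.
Variables (R : realType) (H : lmodType R[i]) (ip : H -> H -> R[i]).
Hypothesis ip_inner : is_inner_product ip.

Lemma ip_linear (a : R[i]) x y z : ip (a *: x + y) z = a * ip x z + ip y z.
Proof. by case: ip_inner. Qed.

Lemma ipC x y : ip y x = (ip x y)^*.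
Proof. by case: ip_inner. Qed.

Lemma ip0l z : ip 0 z = 0.
Proof.
have := ip_linear 1 0 0 z; rewrite scale1r addr0 mul1r => ip0D.
by apply: (addrI (ip 0 z)); rewrite addr0 -ip0D.
Qed.

Lemma ipDl x y z : ip (x + y) z = ip x z + ip y z.
Proof. by rewrite -{1}(scale1r x) ip_linear mul1r. Qed.

Lemma ipZl a x z : ip (a *: x) z = a * ip x z.
Proof. by rewrite -[a *: x]addr0 ip_linear ip0l addr0. Qed.

Lemma ipBl x y z : ip (x - y) z = ip x z - ip y z.
Proof. by rewrite ipDl -scaleN1r ipZl mulN1r. Qed.

Lemma ip0r z : ip z 0 = 0.
Proof. by rewrite ipC ip0l conjc0. Qed.

Lemma ipDr x y z : ip z (x + y) = ip z x + ip z y.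
Proof. by rewrite ipC ipDl rmorphD /= -!ipC. Qed.

Lemma ipZr a x z : ip z (a *: x) = a^* * ip z x.
Proof. by rewrite ipC ipZl rmorphM /= -ipC. Qed.

Lemma ip_suml I (r : seq I) (P : pred I) (F : I -> H) z :
  ip (\sum_(i <- r | P i) F i) z = \sum_(i <- r | P i) ip (F i) z.
Proof. exact: (big_morph (ip^~ z) (fun x y => ipDl x y z) (ip0l z)). Qed.

Lemma ip_sumr I (r : seq I) (P : pred I) (F : I -> H) z :
  ip z (\sum_(i <- r | P i) F i) = \sum_(i <- r | P i) ip z (F i).
Proof. exact: (big_morph (ip z) (fun x y => ipDr x y z) (ip0r z)). Qed.

Definition sqnorm x := complex.Re (ip x x).

Lemma hnormE x : hnorm ip x = Num.sqrt (sqnorm x).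
Proof. by []. Qed.

Lemma sqnorm_ge0 x : 0 <= sqnorm x.
Proof. by case: ip_inner => _ _ ge0 _; move: (ge0 x); rewrite lecE => /andP[]. Qed.

Lemma ip_self x : ip x x = (sqnorm x)%:C.
Proof. by case: ip_inner => _ _ ge0 _; rewrite ge0_RecE. Qed.

Lemma sqnorm_eq0 x : sqnorm x = 0 -> x = 0.
Proof. by case: ip_inner => _ _ _ def0 x0; apply: def0; rewrite ip_self x0. Qed.

Lemma sqnormD x y : sqnorm (x + y) = sqnorm x + sqnorm y + 2 * complex.Re (ip x y).
Proof. by rewrite /sqnorm ipDl !ipDr [ip y x]ipC !ReD Re_conjc; ring. Qed.

Lemma sqnormZ (s : R) x : sqnorm (s%:C *: x) = s ^+ 2 * sqnorm x.
Proof. by rewrite /sqnorm ipZl ipZr ip_self /=; simpc; rewrite mulrA. Qed.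

Lemma cauchy_schwarz x y : complex.Re (ip x y) ^+ 2 <= sqnorm x * sqnorm y.
Proof.
set r := complex.Re (ip x y).
have [y0 | y_neq0] := eqVneq (sqnorm y) 0.
  by rewrite /r y0 (sqnorm_eq0 y0) ip0r mulr0 expr0n.
have y_gt0 : 0 < sqnorm y by rewrite lt_def y_neq0 sqnorm_ge0.
(* 0 <= |b x - r y|^2 = b (a b - r^2) with a = |x|^2, b = |y|^2. *)
have := sqnorm_ge0 ((sqnorm y)%:C *: x + (- r)%:C *: y).
rewrite sqnormD !sqnormZ ipZl ipZr [X in _ * (X * _)]conjc_real mulrA -rmorphM.
rewrite !Re_realM -/r.
have := sqnorm_ge0 x; nra.
Qed.

Lemma ler_hnormD x y : hnorm ip (x + y) <= hnorm ip x + hnorm ip y.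
Proof.
have Re_le : complex.Re (ip x y) <= Num.sqrt (sqnorm x) * Num.sqrt (sqnorm y).
  rewrite -sqrtrM ?sqnorm_ge0 //; apply: le_trans (ler_norm _) _.
  by rewrite -sqrtr_sqr ler_sqrt ?mulr_ge0 ?sqnorm_ge0 // cauchy_schwarz.
rewrite !hnormE -(ler_pXn2r (_ : 0 < 2)%N) ?nnegrE ?addr_ge0 ?sqrtr_ge0 //.
by rewrite sqrrD !sqr_sqrtr ?sqnorm_ge0 // sqnormD; lra.
Qed.

End InnerProduct.

Section Adjoint.
Variable R : realType.
Local Notation C := R[i].

Lemma adjmxE m n (A : 'M[C]_(m, n)) i j : adjmx A i j = (A j i)^*.
Proof. by rewrite !mxE. Qed.

Lemma adjmxK m n (A : 'M[C]_(m, n)) : adjmx (adjmx A) = A.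
Proof. by apply/matrixP => i j; rewrite !adjmxE conjcK. Qed.

Lemma adjmxM m n p (A : 'M[C]_(m, n)) (B : 'M[C]_(n, p)) :
  adjmx (A *m B) = adjmx B *m adjmx A.
Proof.
apply/matrixP => i j; rewrite !mxE rmorph_sum; apply: eq_bigr => k _.
by rewrite !adjmxE rmorphM mulrC.
Qed.

Lemma mul_adjmx00 n (u v : 'cV[C]_n) :
  (adjmx u *m v) 0 0 = \sum_(i < n) (u i 0)^* * v i 0.
Proof. by rewrite mxE; apply: eq_bigr => i _; rewrite adjmxE. Qed.

Lemma mul_adjmx_diag00 n (d : 'rV[C]_n) (u v : 'cV[C]_n) :
  (adjmx u *m diag_mx d *m v) 0 0 = \sum_(k < n) (u k 0)^* * (d 0 k * v k 0).
Proof.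
by rewrite -mulmxA mul_adjmx00; apply: eq_bigr => k _; rewrite mul_diag_mx mxE.
Qed.

Lemma unitary_sandwich n (V A : 'M[C]_n) (u v : 'cV[C]_n) :
  adjmx V *m V = 1%:M ->
  adjmx (V *m u) *m (V *m A *m adjmx V) *m (V *m v) = adjmx u *m A *m v.
Proof.
move=> adjVV; rewrite adjmxM !mulmxA -(mulmxA (adjmx u)) adjVV mulmx1.
by rewrite -(mulmxA _ (adjmx V)) adjVV mulmx1.
Qed.

Lemma l2normE n (c : 'cV[C]_n) :
  l2norm c = Num.sqrt (complex.Re ((adjmx c *m c) 0 0)).
Proof.
by rewrite mul_adjmx00 Re_sum /l2norm; congr Num.sqrt; apply: eq_bigr => i _;
  rewrite Re_conjcM_self.
Qed.

Lemma l2norm_unitary n (V : 'M[C]_n) (c : 'cV[C]_n) :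
  V *m adjmx V = 1%:M -> l2norm (adjmx V *m c) = l2norm c.
Proof.
by move=> VadjV; rewrite !l2normE adjmxM adjmxK -mulmxA (mulmxA V) VadjV mul1mx.
Qed.

Lemma l2norm_ge0 n (c : 'cV[C]_n) : 0 <= l2norm c.
Proof. exact: sqrtr_ge0. Qed.

Lemma sqr_l2norm n (c : 'cV[C]_n) :
  l2norm c ^+ 2 = \sum_(i < n) (complex.Re (c i 0) ^+ 2 + complex.Im (c i 0) ^+ 2).
Proof. by rewrite sqr_sqrtr // sumr_ge0 // => i _; rewrite addr_ge0 ?sqr_ge0. Qed.

End Adjoint.

Section Synthesis.
Variables (R : realType) (H : lmodType R[i]) (ip : H -> H -> R[i]).
Hypothesis ip_inner : is_inner_product ip.
Variable phi : nat -> H.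

Lemma synthD N (u v : 'cV[R[i]]_N) : synth phi (u + v) = synth phi u + synth phi v.
Proof. by rewrite /synth -big_split; apply: eq_bigr => i _; rewrite mxE scalerDl. Qed.

Lemma synthB N (u v : 'cV[R[i]]_N) : synth phi (u - v) = synth phi u - synth phi v.
Proof. by rewrite /synth -sumrB; apply: eq_bigr => i _; rewrite !mxE scalerBl. Qed.

Lemma synth_mulmx N (V : 'M[R[i]]_N) (a : 'cV[R[i]]_N) :
  synth phi (V *m a) = \sum_(k < N) a k 0 *: synth phi (col k V).
Proof.
rewrite /synth; under eq_bigr do rewrite mxE scaler_suml.
rewrite exchange_big /=; apply: eq_bigr => k _; rewrite scaler_sumr.
by apply: eq_bigr => n _; rewrite !mxE scalerA mulrC.
Qed.

Lemma ip_synth N (u v : 'cV[R[i]]_N) :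
  ip (synth phi u) (synth phi v) = (adjmx v *m gram ip phi N *m u) 0 0.
Proof.
rewrite /synth (ip_suml ip_inner) mxE; apply: eq_bigr => n _.
rewrite (ipZl ip_inner) (ip_sumr ip_inner) mxE big_distrl big_distrr /=.
by apply: eq_bigr => m _; rewrite (ipZr ip_inner) !mxE; ring.
Qed.

Lemma ip_synth_datavec N f (v : 'cV[R[i]]_N) :
  ip f (synth phi v) = (adjmx v *m datavec ip phi N f) 0 0.
Proof.
rewrite /synth (ip_sumr ip_inner) mxE; apply: eq_bigr => m _.
by rewrite (ipZr ip_inner) !mxE.
Qed.

End Synthesis.

Section TruncatedSpan.
Variables (R : realType) (H : lmodType R[i]) (ip : H -> H -> R[i]).
Hypothesis ip_inner : is_inner_product ip.
Variables (phi : nat -> H) (N : nat) (V : 'M[R[i]]_N) (sigma : 'rV[R[i]]_N).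
Variable eps : R.

Definition supp_gt (a : 'cV[R[i]]_N) :=
  forall k, ~ (eps%:C < sigma 0 k) -> a k 0 = 0.

Local Notation Heps := (in_Heps phi V sigma eps).

Lemma in_Heps_synth a : supp_gt a -> Heps (synth phi (V *m a)).
Proof. by move=> a_supp; exists (a^~ 0); rewrite synth_mulmx. Qed.

Lemma in_HepsP x : Heps x -> exists2 a, supp_gt a & x = synth phi (V *m a).
Proof.
case=> a [a_supp ->]; exists (\col_k a k) => [k k_le|].
  by rewrite mxE a_supp.
by rewrite synth_mulmx; apply: eq_bigr => k _; rewrite mxE.
Qed.

Lemma in_HepsB x y : Heps x -> Heps y -> Heps (x - y).
Proof.
move=> /in_HepsP[a a_supp ->] /in_HepsP[b b_supp ->].
rewrite -synthB -mulmxBr; apply: in_Heps_synth => k k_le.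
by rewrite !mxE a_supp // b_supp // subr0.
Qed.

Lemma orth_proj_unique f p q :
  is_orth_proj ip phi V sigma eps f p -> is_orth_proj ip phi V sigma eps f q ->
  p = q.
Proof.
case=> Hp p_orth [Hq q_orth]; apply/eqP; rewrite -subr_eq0; apply/eqP.
apply: (sqnorm_eq0 ip_inner).
have Hpq := in_HepsB Hp Hq.
have : ip ((f - q) - (f - p)) (p - q) = 0.
  by rewrite (ipBl ip_inner) q_orth // p_orth // subrr.
by rewrite opprB [_ + (p - f)]addrC addrA subrK /sqnorm => ->.
Qed.

Lemma orth_proj_min f p g :
  is_orth_proj ip phi V sigma eps f p -> Heps g ->
  hnorm ip (f - p) <= hnorm ip (f - g).
Proof.
case=> Hp p_orth Hg; rewrite !hnormE ler_sqrt ?sqnorm_ge0 //.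
have -> : f - g = (f - p) + (p - g) by rewrite addrA subrK.
rewrite (sqnormD ip_inner (f - p)) p_orth /=; last exact: in_HepsB.
by rewrite mulr0 addr0 lerDl sqnorm_ge0.
Qed.

Hypothesis svd : is_svd (gram ip phi N) V sigma.

Lemma tsvd_coef_orth_proj f :
  0 < eps ->
  is_orth_proj ip phi V sigma eps f
    (synth phi (tsvd_coef V sigma eps (datavec ip phi N f))).
Proof.
case: svd => _ adjVV _ GE eps_gt0.
set u := adjmx V *m datavec ip phi N f.
set a := diag_mx (\row_k (if eps%:C < sigma 0 k then (sigma 0 k)^-1 else 0)) *m u.
have -> : tsvd_coef V sigma eps (datavec ip phi N f) = V *m a.
  by rewrite /tsvd_coef /a /u !mulmxA.
split.
  apply: in_Heps_synth => k k_le; rewrite /a mul_diag_mx !mxE.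
  by case: ifP => [k_gt | _]; [case: k_le | rewrite mul0r].
move=> y /in_HepsP[b b_supp ->].
rewrite (ipBl ip_inner) ip_synth_datavec // ip_synth // GE unitary_sandwich //.
rewrite adjmxM -mulmxA -/u mul_adjmx_diag00 mul_adjmx00 -sumrB big1 // => k _.
rewrite /a mul_diag_mx !mxE; case: ifP => [k_gt | k_le].
  have sigma_neq0 : sigma 0 k != 0.
    by rewrite gt_eqF // (lt_trans _ k_gt) // ltcR.
  by rewrite mulVKf // subrr.
by rewrite b_supp ?k_le // rmorph0 !mul0r subrr.
Qed.

Lemma sqnorm_synth_svd (w : 'cV[R[i]]_N) :
  sqnorm ip (synth phi (V *m w)) =
  \sum_(k < N) complex.Re (sigma 0 k) *
    (complex.Re (w k 0) ^+ 2 + complex.Im (w k 0) ^+ 2).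
Proof.
case: svd => _ adjVV sigma_ge0 GE.
rewrite /sqnorm ip_synth // GE unitary_sandwich // mul_adjmx_diag00 Re_sum.
apply: eq_bigr => k _.
by rewrite -(ge0_RecE (sigma_ge0 k)) mulrCA Re_realM Re_conjcM_self.
Qed.

Lemma dist_synth_Heps (z : 'cV[R[i]]_N) :
  0 < eps ->
  exists2 g, Heps g &
    hnorm ip (synth phi z - g) <= Num.sqrt eps * l2norm z.
Proof.
move=> eps_gt0.
have [VadjV _ sigma_ge0 _] := svd.
set w := adjmx V *m z.
set a := \col_k (if eps%:C < sigma 0 k then w k 0 else 0).
set d := \col_k (if eps%:C < sigma 0 k then 0 else w k 0).
have w_split : w = a + d.
  by apply/matrixP => k j; rewrite ord1 !mxE; case: ifP; rewrite ?addr0 ?add0r.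
exists (synth phi (V *m a)).
  by apply: in_Heps_synth => k k_le; rewrite mxE ifN //; apply/negP.
have -> : synth phi z - synth phi (V *m a) = synth phi (V *m d).
  rewrite -[z]mul1mx -VadjV -mulmxA -/w w_split mulmxDr synthD.
  by rewrite [_ + synth phi (V *m d)]addrC addrK.
rewrite hnormE -(l2norm_unitary _ VadjV) -/w -(ger0_norm (l2norm_ge0 w)).
rewrite -sqrtr_sqr -(sqrtrM _ (ltW eps_gt0)) ler_sqrt; last first.
  by rewrite mulr_ge0 ?sqr_ge0 ?(ltW eps_gt0).
rewrite [l2norm w ^+ 2]sqr_l2norm mulr_sumr sqnorm_synth_svd.
apply: ler_sum => k _; rewrite mxE; case: ifP => [_ | k_le].
  by rewrite /= expr0n /= addr0 mulr0 mulr_ge0 ?addr_ge0 ?sqr_ge0 ?(ltW eps_gt0).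
rewrite ler_wpM2r ?addr_ge0 ?sqr_ge0 //.
by rewrite leNgt -ltcR ge0_RecE ?k_le.
Qed.

End TruncatedSpan.

Section ZeroExtension.
Variables (R : realType) (H : lmodType R[i]) (phi : nat -> H) (M : nat).

Definition zero_ext (c : 'cV[R[i]]_M) : 'cV[R[i]]_M.+1 :=
  \col_i (if unlift ord_max i is Some j then c j 0 else 0).

Lemma zero_ext_max c : zero_ext c ord_max 0 = 0.
Proof. by rewrite mxE unlift_none. Qed.

Lemma zero_ext_widen c (i : 'I_M) : zero_ext c (widen_ord (leqnSn M) i) 0 = c i 0.
Proof.
have -> : widen_ord (leqnSn M) i = lift ord_max i.
  by apply: val_inj; rewrite /= /bump leqNgt ltn_ord.
by rewrite mxE liftK.
Qed.

Lemma synth_zero_ext c : synth phi (zero_ext c) = synth phi c.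
Proof.
rewrite /synth big_ord_recr /= zero_ext_max scale0r addr0.
by apply: eq_bigr => i _; rewrite zero_ext_widen.
Qed.

Lemma l2norm_zero_ext c : l2norm (zero_ext c) = l2norm c.
Proof.
rewrite /l2norm big_ord_recr /= zero_ext_max /= expr0n addr0 addr0.
by congr Num.sqrt; apply: eq_bigr => i _; rewrite zero_ext_widen.
Qed.

End ZeroExtension.

Theorem theorem1 (R : realType) (H : lmodType R[i]) (ip : H -> H -> R[i])
  (phi : nat -> H) (eps : R) (f : H) (N : nat)
  (V : 'M[R[i]]_N) (sigma : 'rV[R[i]]_N)
  (V' : 'M[R[i]]_N.-1) (sigma' : 'rV[R[i]]_N.-1)
  (pN pN' : H) :
  is_hilbert ip ->
  0 < eps ->
  (2 <= N)%N ->
  is_svd (gram ip phi N) V sigma ->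
  is_svd (gram ip phi N.-1) V' sigma' ->
  is_orth_proj ip phi V sigma eps f pN ->
  is_orth_proj ip phi V' sigma' eps f pN' ->
  hnorm ip (f - pN) <=
    hnorm ip (f - pN') +
    Num.sqrt eps * l2norm (tsvd_coef V' sigma' eps (datavec ip phi N.-1 f)).
Proof.
case=> ip_inner _ eps_gt0 N_ge2 svdN svdN1 projN projN1.
case: N N_ge2 => // M _ in V sigma V' sigma' svdN svdN1 projN projN1 *.
rewrite /= in V' sigma' svdN1 projN1 *.
set c := tsvd_coef V' sigma' eps _.
have pN'E : pN' = synth phi c.
  exact: (orth_proj_unique ip_inner projN1
           (tsvd_coef_orth_proj ip_inner svdN1 f eps_gt0)).
have [g Hg g_near] := dist_synth_Heps ip_inner svdN (zero_ext c) eps_gt0.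
rewrite synth_zero_ext l2norm_zero_ext -pN'E in g_near.
apply: le_trans (orth_proj_min ip_inner projN Hg) _.
have -> : f - g = (f - pN') + (pN' - g) by rewrite addrA subrK.
by apply: le_trans (ler_hnormD ip_inner _ _) _; rewrite lerD2l.
Qed.
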